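(* For every $n\ge1$, the DFA $\mathcal W_n$ defined below is minimal, accepts a right ideal, and its transition semigroup has size $n^{n-1}$.
   Context: $Q_n=\{0,\dots,n-1\}$. Notation: $(p\to q)$ maps $p$ to $q$ and fixes all other states; $(p_0,\dots,p_{k-1})$ is the cyclic permutation $p_0\mapsto\cdots\mapsto p_{k-1}\mapsto p_0$ fixing other states; $\mathbf 1$ is the identity. For $n\ge3$, $\mathcal W_n$ has states $Q_n$, initial state $0$, final states $\{n-1\}$, alphabet $\{a,b,c,d\}$, with $a$ inducing $(0,1,\dots,n-2)$, $b$ inducing $(0,1)$, $c$ inducing $(n-2\to 0)$, $d$ inducing $(n-2\to n-1)$ (for $n=3$, $a$ and $b$ coincide and alphabet $\{a,c,d\}$ suffices). $\mathcal W_2$ has states $Q_2$, initial $0$, final $\{1\}$, alphabet $\{a,b\}$, $a$ inducing $(0\to1)$ and $b$ inducing $\mathbf 1$. $\mathcal W_1$ has the single state $0$, which is initial and final, alphabet $\{a\}$, $a$ inducing $\mathbf 1$. A right ideal is a nonempty $L$ with $L=L\Sigma^*$. The transition semigroup is the set of state transformations induced by nonempty words. *)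

From mathcomp Require Import all_boot.
Set Implicit Arguments. Unset Strict Implicit. Unset Printing Implicit Defensive.

Record dfa (S : finType) := Dfa {
  st : finType;
  delta : S -> st -> st;
  init : st;
  final : pred st }.
Arguments st {S} d.
Arguments delta {S} d _ _.
Arguments init {S} d.
Arguments final {S} d _.

Definition run (S : finType) {D : dfa S} (q : st D) (w : seq S) : st D :=
  foldl (fun p x => delta D x p) q w.

Definition accepts (S : finType) (D : dfa S) (w : seq S) : bool :=
  final D (run (init D) w).

Definition right_ideal (S : finType) (L : seq S -> Prop) : Prop :=
  (exists w, L w) /\ (forall w, L w <-> exists u v, w = u ++ v /\ L u).

Definition minimal (S : finType) (D : dfa S) : Prop :=
  forall D' : dfa S, (forall w, accepts D' w = accepts D w) -> #|st D| <= #|st D'|.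

Definition in_trans_semigroup (S : finType) (D : dfa S) (f : {ffun st D -> st D}) : Prop :=
  exists w : seq S, w <> [::] /\ forall q, f q = run q w.

Definition trans_semigroup_card (S : finType) (D : dfa S) (k : nat) : Prop :=
  exists T : {set {ffun st D -> st D}},
    (forall f, f \in T <-> in_trans_semigroup f) /\ #|T| = k.

(* number of letters: 4 (a,b,c,d) for n >= 3, 2 (a,b) for n = 2, 1 (a) for n = 1.
   Letters are indexed 0 = a, 1 = b, 2 = c, 3 = d. *)
Definition nletters (n : nat) : nat := if 3 <= n then 4 else n.

Definition W_act (n x q : nat) : nat :=
  if 3 <= n then
    match x with
    | 0 => (* a = (0,1,...,n-2) *)
        if q < n - 2 then q.+1 else if q == n - 2 then 0 else q
    | 1 => (* b = (0,1) *)
        if q == 0 then 1 else if q == 1 then 0 else q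
    | 2 => (* c = (n-2 -> 0) *)
        if q == n - 2 then 0 else q
    | _ => (* d = (n-2 -> n-1) *)
        if q == n - 2 then n - 1 else q
    end
  else if n == 2 then
    (* a = (0 -> 1), b = identity *)
    (if x == 0 then (if q == 0 then 1 else q) else q)
  else q .

(* W_act n x q < n whenever q < n, so insubd never uses its default. *)
Definition W_delta (n : nat) (x : 'I_(nletters n)) (q : 'I_n) : 'I_n :=
  insubd q (W_act n x q).

Definition W (n : nat) (hn : 0 < n) : dfa 'I_(nletters n) :=
  @Dfa _ 'I_n (@W_delta n) (Ordinal hn)
       (fun q : 'I_n => nat_of_ord q == n.-1).

From mathcomp Require Import all_boot fingroup perm.
From mathcomp Require Import zify.
Set Implicit Arguments. Unset Strict Implicit. Unset Printing Implicit Defensive.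

(* Every nonempty word fixes the sink n-1, and conversely every transformation
   fixing n-1 is induced by a nonempty word: the letters a = (0,...,n-2) and
   b = (0,1) generate all permutations of {0,...,n-2} (each transposition
   (j, j+1) is b conjugated by a^j), conjugating c = (n-2 -> 0) and
   d = (n-2 -> n-1) by such permutations yields every map (p -> q) with p <> n-1,
   and a transformation fixing n-1 that is not a permutation is such a map
   followed by a transformation with a larger image.  Hence the transition
   semigroup has n^(n-1) elements, and since n-1 is the unique final state and
   is absorbing, the maps (0 -> q) and (p -> n-1) show that W_n is minimal and
   that its language is a right ideal. *)

Lemma run_cat (S : finType) (D : dfa S) (q : st D) u v :
  run q (u ++ v) = run (run q u) v.
Proof. by rewrite /run foldl_cat. Qed.

Section Automata.
Variables (S : finType) (D : dfa S).

Lemma minimal_of_reachable_distinguishable :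
  (forall q : st D, exists w, run (init D) w = q) ->
  (forall p q : st D, (forall v, final D (run p v) = final D (run q v)) -> p = q) ->
  minimal D.
Proof.
move=> reach dist D' same_lang.
have reachb q : exists w, run (init D) w == q by have [w /eqP] := reach q; exists w.
pose reach_word q := xchoose (reachb q).
have reach_wordP q : run (init D) (reach_word q) = q := eqP (xchooseP (reachb q)).
pose phi q := run (init D') (reach_word q).
suff /leq_card : injective phi by [].
move=> p q phi_pq; apply: dist => v.
have := same_lang (reach_word p ++ v); have := same_lang (reach_word q ++ v).
by rewrite /accepts !run_cat !reach_wordP -/(phi p) -/(phi q) phi_pq => -> ->.
Qed.

Lemma right_ideal_of_absorbing_final :
  (forall x q, final D q -> final D (delta D x q)) ->
  (exists w, accepts D w) -> right_ideal (accepts D).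
Proof.
move=> absorbing nonempty; split=> [//|w]; split=> [Lw|[u [v [-> Lu]]]].
  by exists w, [::]; rewrite cats0.
rewrite /accepts run_cat in Lu *; move: (run _ u) Lu.
by elim: v => //= x v IHv q Fq; apply/IHv/absorbing.
Qed.

Definition induced (f : st D -> st D) :=
  exists w : seq S, w <> [::] /\ forall q, f q = run q w.

Lemma induced_ext f g : induced f -> f =1 g -> induced g.
Proof. by case=> w [w_nil fw] fg; exists w; split=> // q; rewrite -fg. Qed.

Lemma induced_comp f g : induced f -> induced g -> induced (g \o f).
Proof.
case=> [u [u_nil fu]] [v [_ gv]]; exists (u ++ v); split; first by case: u u_nil {fu}.
by move=> q; rewrite run_cat /= fu gv.
Qed.

Lemma induced_letter x : induced (delta D x).
Proof. by exists [:: x]. Qed.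

End Automata.

Definition mapsto (T : eqType) (x y : T) (q : T) : T := if q == x then y else q.

Section Transformations.
Variables (X : finType) (z : X) (P : (X -> X) -> Prop).
Hypothesis P_ext : forall f g, P f -> f =1 g -> P g.
Hypothesis P_comp : forall f g, P f -> P g -> P (g \o f).
Hypothesis P_id : P id.

Local Open Scope group_scope.

Lemma P_mulg (s t : {perm X}) : P s -> P t -> P (s * t).
Proof. by move=> Ps Pt; apply: P_ext (P_comp Ps Pt) _ => q; rewrite permM. Qed.

Lemma P_expg (s : {perm X}) j : P s -> P (s ^+ j).
Proof.
move=> Ps; elim: j => [|j IHj]; first by apply: P_ext P_id _ => q; rewrite perm1.
by rewrite expgSr; apply: P_mulg.
Qed.

Lemma P_invg (s : {perm X}) : P s -> P s^-1.
Proof. by rewrite invg_expg; apply: P_expg. Qed.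

Lemma P_conjg (s t : {perm X}) : P s -> P t -> P (t ^ s).
Proof. by move=> Ps Pt; exact: P_mulg (P_invg Ps) (P_mulg Pt Ps). Qed.

Lemma P_perm_fixing :
  (forall x y, x != z -> y != z -> P (tperm x y)) ->
  forall s : {perm X}, s z = z -> P s.
Proof.
move=> P_tperm s; have [k] := ubnP #|[pred x | s x != x]|.
elim: k s => // k IHk s /ltnSE moved_s sz.
have [x sx | s_id] := pickP (fun x => s x != x); last first.
  by apply: P_ext P_id _ => q; rewrite /= (eqP (negbFE (s_id q))).
have xz : x != z by apply: contraNneq sx => ->; rewrite sz.
have s'xz : s^-1 x != z.
  by apply: contraNneq xz => s'x_z; rewrite -(permKV s x) s'x_z sz.
set t := tperm x (s^-1 x).
have -> : s = t * (t * s) by rewrite mulgA /t tperm2 mul1g.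
apply: P_mulg (P_tperm _ _ xz s'xz) (IHk _ _ _); last by rewrite permM tpermD.
rewrite (cardD1 x) inE sx in moved_s; apply: leq_ltn_trans moved_s.
apply: subset_leq_card; apply/subsetP => y; rewrite !inE permM.
rewrite /t; case: tpermP => [->|->|yx _]; first by rewrite permKV eqxx.
  rewrite permKV [s^-1 x == x]eq_sym andbb => _.
  by apply: contraNneq sx => x_s'x; rewrite {1}x_s'x permKV.
by move/eqP: yx => ->.
Qed.

Lemma P_mapsto_conj x0 y0 x y :
  (forall s : {perm X}, s z = z -> P s) ->
  x0 != z -> x0 != y0 -> P (mapsto x0 y0) ->
  x != z -> x != y -> (y == z) = (y0 == z) -> P (mapsto x y).
Proof.
move=> P_perm x0z x0y0 Pe xz xy yz_y0z.
pose u := tperm x x0 y; pose s := tperm x x0 * tperm u y0.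
have ux0 : u != x0 by rewrite -(tpermL x x0) (inj_eq perm_inj) eq_sym.
have sx : s x = x0 by rewrite permM tpermL tpermD // eq_sym.
have sy : s y = y0 by rewrite permM tpermL.
have fix_z : tperm x x0 z = z by rewrite tpermD.
have sz : s z = z.
  rewrite permM fix_z; have [yz | yz] := eqVneq y z.
    by move: yz_y0z; rewrite /u yz fix_z eqxx => /esym/eqP ->; apply: tpermR.
  by rewrite tpermD -?yz_y0z // /u -fix_z (inj_eq perm_inj).
have s'z : s^-1 z = z by rewrite -{1}sz permK.
apply: P_ext (P_comp (P_comp (P_perm s sz) Pe) (P_perm _ s'z)) _ => q /=.
rewrite /mapsto -sx (inj_eq perm_inj); case: eqP => _; last by rewrite permK.
by rewrite -sy permK.
Qed.

Lemma P_fixing :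
  (forall s : {perm X}, s z = z -> P s) ->
  (forall x y, x != z -> x != y -> P (mapsto x y)) ->
  forall f, f z = z -> P f.
Proof.
(* Induction on the defect: a non-injective f is g after (i -> j) with f i = f j,
   where g differs from f only at i, which it sends outside the image of f. *)
move=> P_perm P_mapsto f; have [k] := ubnP (#|X| - #|codom f|).
elim: k f => // k IHk f /ltnSE defect_f fz.
have [f_inj | f_ninj] := boolP (injectiveb f).
  by apply: P_ext (P_perm (perm (injectiveP _ f_inj)) _) _ => [|q]; rewrite permE.
have [i [j ij [fij iz]]] : exists i, exists2 j, i != j & f i = f j /\ i != z.
  have [i [j ij fij]] := injectivePn _ f_ninj.
  have [iz | iz] := eqVneq i z; last by exists i, j.
  by exists j, i; [rewrite eq_sym | split; [|rewrite -iz eq_sym]].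
have codom_f_lt : #|codom f| < #|X|.
  rewrite ltn_neqAle max_card andbT; apply: contra f_ninj => /image_injP f_inj.
  by apply/injectiveP => a b; apply: f_inj.
have [y _ y_new] : exists2 y, y \in {: X} & y \notin codom f.
  by apply/subsetPn; apply: contraTN codom_f_lt => /subset_leq_card; rewrite leqNgt.
pose g q := if q == i then y else f q.
have codom_f_g : #|codom f| < #|codom g|.
  apply/proper_card/properP; split; last first.
    by exists y => //; apply/codomP; exists i; rewrite /g eqxx.
  apply/subsetP => _ /codomP [q ->]; apply/codomP.
  have [-> | qi] := eqVneq q i; first by exists j; rewrite /g eq_sym (negbTE ij).
  by exists q; rewrite /g (negbTE qi).
have Pg : P g.
  apply: IHk; last by rewrite /g eq_sym (negbTE iz).
  exact: leq_trans (ltn_sub2l codom_f_lt codom_f_g) defect_f.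
apply: P_ext (P_comp (P_mapsto _ _ iz ij) Pg) _ => q.
rewrite /= /mapsto /g; have [-> | qi] := eqVneq q i; last by rewrite (negbTE qi).
by rewrite eq_sym (negbTE ij).
Qed.

End Transformations.

Lemma W_act_lt n x q : q < n -> W_act n x q < n.
Proof.
rewrite /W_act; case: ifP => ? q_lt; last by repeat case: ifP => ?; lia.
by case: x => [|[|[|x]]] /=; repeat case: ifP => ?; lia.
Qed.

Lemma W_act_sink n x : 0 < n -> W_act n x n.-1 = n.-1.
Proof.
rewrite /W_act; case: ifP => ? n_gt0; last by repeat case: ifP => ?; lia.
by case: x => [|[|[|x]]] /=; repeat case: ifP => ?; lia.
Qed.

Lemma ltn_ord_max m (q : 'I_m.+1) : (q < m) = (q != ord_max).
Proof. by rewrite ltn_neqAle -ltnS ltn_ord andbT. Qed.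

Section SinkAutomaton.
Variables (m : nat) (hn : 0 < m.+1).
Local Notation D := (W hn).

Lemma val_W_delta x (q : 'I_m.+1) : val (delta D x q) = W_act m.+1 x q.
Proof. by rewrite /= /W_delta insubdK // unfold_in /= W_act_lt. Qed.

Lemma W_delta_sink x : delta D x ord_max = ord_max.
Proof. by apply: val_inj; rewrite val_W_delta W_act_sink. Qed.

Lemma W_run_sink w : run (ord_max : st D) w = ord_max.
Proof. by elim: w => // x w IHw; rewrite -[RHS]IHw -[in RHS](W_delta_sink x). Qed.

Lemma W_final q : final D q = (q == ord_max).
Proof. by []. Qed.

Lemma W_init : init D = ord0.
Proof. exact: val_inj. Qed.

Lemma W_induced_sink_fixed f : induced (D := D) f -> f ord_max = ord_max.
Proof. by case=> w [_ ->]; apply: W_run_sink. Qed.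

End SinkAutomaton.

Section LargeAutomaton.
Variables (k : nat) (hn : 0 < k.+3).
Local Notation D := (W hn).

Let a : 'I_(nletters k.+3) := Ordinal (isT : 0 < 4).
Let b : 'I_(nletters k.+3) := Ordinal (isT : 1 < 4).
Let c : 'I_(nletters k.+3) := Ordinal (isT : 2 < 4).
Let d : 'I_(nletters k.+3) := Ordinal (isT : 3 < 4).

Lemma val_W_delta_a q :
  val (delta D a q) = if q < k.+1 then q.+1 else if q == k.+1 :> nat then 0 else q.
Proof. by rewrite val_W_delta. Qed.

Lemma W_a_inj : injective (delta D a).
Proof.
move=> p q /(congr1 val); rewrite !val_W_delta_a => E; apply: val_inj => /=.
by move: (ltn_ord p) (ltn_ord q) E; repeat case: ifP => ?; lia.
Qed.

Let rho := perm W_a_inj.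

Lemma rho_shift i j : i + j < k.+2 -> (rho ^+ j)%g (inord i) = inord (i + j).
Proof.
elim: j => [|j IHj] lt_ij; first by rewrite expg0 perm1 addn0.
rewrite expgSr permM IHj; last by lia.
rewrite permE; apply: val_inj => /=.
by rewrite val_W_delta_a !inordK ?addnS ?ifT //; lia.
Qed.

Lemma W_b_tperm : delta D b =1 tperm (inord 0) (inord 1).
Proof.
move=> q; apply: val_inj; rewrite val_W_delta /=.
case: tpermP => [->|->|]; rewrite ?inordK //.
case: q => [[|[|q]] q_lt] q0 q1 //; [case: q0 | case: q1].
  all: by apply: val_inj; rewrite /= inordK.
Qed.

Lemma inord_eq i j : i < k.+3 -> j < k.+3 -> (inord i == inord j :> 'I_k.+3) = (i == j).
Proof. by move=> i_lt j_lt; rewrite -val_eqE /= !inordK. Qed.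

Lemma W_c_mapsto : delta D c =1 mapsto (inord k.+1) ord0.
Proof.
move=> q; apply: val_inj; rewrite val_W_delta /mapsto /W_act /=.
by rewrite -val_eqE /= inordK //; case: ifP.
Qed.

Lemma W_d_mapsto : delta D d =1 mapsto (inord k.+1) ord_max.
Proof.
move=> q; apply: val_inj; rewrite val_W_delta /mapsto /W_act /=.
by rewrite -val_eqE /= inordK //; case: ifP.
Qed.

Lemma W_induced_id_large : induced (D := D) id.
Proof.
apply: induced_ext (induced_comp (induced_letter D b) (induced_letter D b)) _ => q.
by rewrite /comp !W_b_tperm tpermK.
Qed.

Let induced_extW := @induced_ext _ D.
Let induced_compW := @induced_comp _ D.

Lemma W_induced_adjacent_tperm j :
  j < k.+1 -> induced (D := D) (tperm (inord j) (inord j.+1)).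
Proof.
move=> lt_j; have rho_induced : induced (D := D) rho.
  by apply: induced_extW (induced_letter D a) _ => q; rewrite permE.
have tperm01_induced : induced (D := D) (tperm (inord 0) (inord 1)).
  exact: induced_extW (induced_letter D b) W_b_tperm.
have rho_j_induced := P_expg induced_extW induced_compW W_induced_id_large j rho_induced.
have := P_conjg induced_extW induced_compW W_induced_id_large rho_j_induced tperm01_induced.
by rewrite tpermJ !rho_shift ?add0n ?add1n //; lia.
Qed.

Lemma W_induced_tperm_gap i l :
  i + l < k.+1 -> induced (D := D) (tperm (inord i) (inord (i + l).+1)).
Proof.
elim: l => [|l IHl] lt_il; first by rewrite addn0; apply: W_induced_adjacent_tperm; lia.
have := P_conjg induced_extW induced_compW W_induced_id_large (IHl _)
  (W_induced_adjacent_tperm (_ : (i + l).+1 < k.+1)).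
rewrite tpermJ tpermR tpermD ?addnS ?inord_eq; try lia.
by apply; lia.
Qed.

Lemma W_induced_tperm_large x y :
  x != ord_max -> y != ord_max -> induced (D := D) (tperm x y).
Proof.
wlog lt_xy : x y / x < y.
  move=> wlog_lt xz yz; case: (ltngtP x y) => [lt_xy | lt_yx | /val_inj ->].
  - exact: wlog_lt.
  - by rewrite tpermC; apply: wlog_lt.
  - by rewrite tperm1; apply: induced_extW W_induced_id_large _ => q; rewrite perm1.
rewrite -!ltn_ord_max => x_lt y_lt.
have := W_induced_tperm_gap (i := x) (l := y - x - 1) _.
have -> : (x + (y - x - 1)).+1 = y by lia.
by rewrite !inord_val; apply; lia.
Qed.

Lemma W_induced_perm_fixing_large (s : {perm 'I_k.+3}) :
  s ord_max = ord_max -> induced (D := D) s.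
Proof.
exact: P_perm_fixing induced_extW induced_compW W_induced_id_large W_induced_tperm_large s.
Qed.

Lemma W_induced_mapsto_large x y :
  x != ord_max -> x != y -> induced (D := D) (mapsto x y).
Proof.
move=> xz xy.
have kz : inord k.+1 != ord_max :> 'I_k.+3 by rewrite -val_eqE /= inordK; lia.
have k0 : inord k.+1 != ord0 :> 'I_k.+3 by rewrite -val_eqE /= inordK; lia.
have [y_max | yz] := eqVneq y ord_max.
  apply: (P_mapsto_conj induced_extW induced_compW W_induced_perm_fixing_large kz kz
    (induced_extW (induced_letter D d) W_d_mapsto)) => //.
  by rewrite y_max.
apply: (P_mapsto_conj induced_extW induced_compW W_induced_perm_fixing_large kz k0
  (induced_extW (induced_letter D c) W_c_mapsto)) => //.
by rewrite (negbTE yz).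
Qed.

End LargeAutomaton.

Lemma card_sink_fixing m :
  #|[set f : {ffun 'I_m.+1 -> 'I_m.+1} | f ord_max == ord_max]| = m.+1 ^ m.
Proof.
pose extend (g : {ffun 'I_m -> 'I_m.+1}) : {ffun 'I_m.+1 -> 'I_m.+1} :=
  [ffun i => oapp g ord_max (unlift ord_max i)].
have -> : [set f : {ffun 'I_m.+1 -> 'I_m.+1} | f ord_max == ord_max] = extend @: setT.
  apply/setP => f; rewrite inE; apply/eqP/imsetP => [f_max | [g _ ->]].
    exists [ffun j => f (lift ord_max j)] => //; apply/ffunP => i.
    by rewrite ffunE; case: unliftP => [j ->|->] //=; rewrite ffunE.
  by rewrite ffunE unlift_none.
rewrite card_imset ?cardsT ?card_ffun ?card_ord // => g g' /ffunP eq_gg'.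
by apply/ffunP => j; have := eq_gg' (lift ord_max j); rewrite !ffunE liftK.
Qed.

Lemma W_induced_id m (hn : 0 < m.+1) : induced (D := W hn) id.
Proof.
case: m hn => [|[|k]] hn.
- apply: induced_ext (induced_letter _ (Ordinal (isT : 0 < 1))) _ => q.
  by apply: val_inj; rewrite val_W_delta.
- apply: induced_ext (induced_letter _ (Ordinal (isT : 1 < 2))) _ => q.
  by apply: val_inj; rewrite val_W_delta.
- exact: W_induced_id_large.
Qed.

Lemma W_induced_tperm m (hn : 0 < m.+1) x y :
  x != ord_max -> y != ord_max -> induced (D := W hn) (tperm x y).
Proof.
case: m hn x y => [|[|k]] hn x y; first by rewrite (ord1 x).
- rewrite -!ltn_ord_max => x0 y0; have -> : y = x by apply: val_inj => /=; lia.
  by rewrite tperm1; apply: induced_ext (W_induced_id hn) _ => q; rewrite perm1.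
- exact: W_induced_tperm_large.
Qed.

Lemma W_induced_mapsto m (hn : 0 < m.+1) x y :
  x != ord_max -> x != y -> induced (D := W hn) (mapsto x y).
Proof.
case: m hn x y => [|[|k]] hn x y; first by rewrite (ord1 x).
- rewrite -ltn_ord_max => x0 xy; have x_0 : x = ord0 by apply: val_inj => /=; lia.
  have y_1 : y = ord_max.
    by apply: val_inj; move: xy (ltn_ord y); rewrite x_0 -val_eqE /=; lia.
  apply: induced_ext (induced_letter _ (Ordinal (isT : 0 < 2))) _ => q.
  apply: val_inj; rewrite val_W_delta /mapsto x_0 y_1.
  by case: q => [[|[|q]] q_lt].
- exact: W_induced_mapsto_large.
Qed.

Lemma W_induced_iff m (hn : 0 < m.+1) f :
  induced (D := W hn) f <-> f ord_max = ord_max.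
Proof.
split; first exact: W_induced_sink_fixed.
have induced_extW := @induced_ext _ (W hn); have induced_compW := @induced_comp _ (W hn).
have induced_perm (s : {perm 'I_m.+1}) : s ord_max = ord_max -> induced (D := W hn) s.
  exact: P_perm_fixing induced_extW induced_compW (W_induced_id hn) (W_induced_tperm hn) s.
exact: P_fixing induced_extW induced_compW induced_perm (W_induced_mapsto hn) f.
Qed.

Section Consequences.
Variables (m : nat) (hn : 0 < m.+1).
Local Notation D := (W hn).

Lemma W_reachable (q : 'I_m.+1) : exists w, run (init D) w = q.
Proof.
rewrite W_init; have [-> | q0] := eqVneq q ord0; first by exists [::].
have max0 : ord_max != ord0 :> 'I_m.+1.
  apply: contraNneq q0 => /(congr1 val) /= m0.
  by apply/eqP/val_inj => /=; move: (ltn_ord q); lia.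
have [w [_ /(_ ord0)]] : induced (D := D) (mapsto ord0 q).
  by apply/W_induced_iff; rewrite /mapsto (negbTE max0).
by rewrite /mapsto eqxx => ->; exists w.
Qed.

Lemma W_distinguishable p q :
  (forall v, final D (run p v) = final D (run q v)) -> p = q.
Proof.
wlog pz : p q / p != ord_max.
  move=> wlog_pz same; have [p_max | pz] := eqVneq p ord_max; last exact: wlog_pz.
  have [-> // | qz] := eqVneq q ord_max; apply/esym/wlog_pz => // v; exact/esym.
move=> same; have [// | pq] := eqVneq p q.
have [qz | qz] := eqVneq q ord_max.
  by have := same [::]; rewrite !W_final /= qz eqxx (negbTE pz).
have [w [_ wE]] : induced (D := D) (mapsto p ord_max).
  by apply/W_induced_iff; rewrite /mapsto; case: ifP.
have := same w; rewrite -!wE /mapsto eqxx !W_final eqxx.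
by rewrite [q == p]eq_sym (negbTE pq) (negbTE qz).
Qed.

Lemma W_minimal : minimal D.
Proof.
exact: (@minimal_of_reachable_distinguishable _ D W_reachable W_distinguishable).
Qed.

Lemma W_right_ideal : right_ideal (accepts D).
Proof.
apply: right_ideal_of_absorbing_final => [x q | ].
  by rewrite !W_final => /eqP ->; rewrite W_delta_sink.
by have [w w_max] := W_reachable ord_max; exists w; rewrite /accepts w_max W_final.
Qed.

Lemma W_trans_semigroup_card : trans_semigroup_card D (m.+1 ^ m).
Proof.
exists [set f : {ffun 'I_m.+1 -> 'I_m.+1} | f ord_max == ord_max].
split; last exact: card_sink_fixing.
move=> f; rewrite inE; split => [/eqP f_max | f_induced].
  exact/W_induced_iff.
exact/eqP/W_induced_iff.
Qed.

End Consequences.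

Theorem lemma1 (n : nat) (hn : 0 < n) :
  minimal (W hn) /\ right_ideal (fun w => accepts (W hn) w) /\
  trans_semigroup_card (W hn) (n ^ n.-1).
Proof.
case: n hn => // m hn.
split; first exact: W_minimal.
by split; [apply: W_right_ideal | apply: W_trans_semigroup_card].
Qed.
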